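(* Consider the two-bidder bidding game (defined in the context) in which both bidders have made the same ex-ante latency investment, so that $t_1=t_2$. Then this bidding game has a completely separating Bayesian Nash equilibrium, i.e. one in which each bidder's bid is a strictly increasing function of its valuation.
   Context: Fix a parameter $g>0$ and the boost function $\pi(b)=\frac{gb}{b+1}$ for $b\ge0$. Two bidders $i\in\{1,2\}$ have fixed latencies (timestamps) $t_1,t_2$ that are commonly known. Each bidder privately learns its valuation $v_i$, with $v_1,v_2$ independent and uniformly distributed on $[0,1]$, and then chooses a bid $b_i\ge0$. The bidder's score is $\pi(b_i)-t_i$; the bidder with the higher score has its transaction ordered first and receives its valuation. Bids are paid regardless of the outcome (all-pay), so bidder $i$'s payoff is $v_i\cdot\mathbf{1}[\text{$i$ has the higher score}]-b_i$. *)

From HB Require Import structures.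
From mathcomp Require Import all_boot all_order all_algebra.
From mathcomp Require Import all_classical all_reals all_analysis.
Set Implicit Arguments. Unset Strict Implicit. Unset Printing Implicit Defensive.
Import Order.TTheory GRing.Theory Num.Theory.
Local Open Scope classical_set_scope.
Local Open Scope ring_scope.

Section TwoBidderGame.
Variable R : realType.

Definition boost (g b : R) : R := g * b / (b + 1).

Definition score (g t b : R) : R := boost g b - t.

(* A strategy maps a valuation in [0,1] to a bid. *)
Definition strategy := R -> R.

Definition feasible (s : strategy) : Prop :=
  forall v, 0 <= v <= 1 -> 0 <= s v.

(* Interim (expected) payoff of a bidder with latency ti, valuation v,
   bidding b, against an opponent with latency tj using strategy sj, whose
   valuation w is uniform on [0,1] (Lebesgue measure on [0,1]). Payoff is v*P(win) - b (all-pay). *)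
Definition win_prob (g ti tj b : R) (sj : strategy) : \bar R :=
  lebesgue_measure [set w : R | 0 <= w <= 1 /\ score g tj (sj w) < score g ti b].

Definition interim_payoff (g ti tj v b : R) (sj : strategy) : \bar R :=
  (v%:E * win_prob g ti tj b sj - b%:E)%E.

Definition bayes_nash_eq (g t1 t2 : R) (s1 s2 : strategy) : Prop :=
  feasible s1 /\ feasible s2 /\
  (forall v b, 0 <= v <= 1 -> 0 <= b ->
     (interim_payoff g t1 t2 v b s2 <= interim_payoff g t1 t2 v (s1 v) s2)%E) /\
  (forall v b, 0 <= v <= 1 -> 0 <= b ->
     (interim_payoff g t2 t1 v b s1 <= interim_payoff g t2 t1 v (s2 v) s1)%E).

Definition separating (s : strategy) : Prop :=
  forall v w, 0 <= v -> v < w -> w <= 1 -> s v < s w.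

End TwoBidderGame.

(* With equal latencies and a boost that is strictly increasing on nonnegative
   bids, scores compare exactly as bids do, so the game is the two-bidder
   all-pay auction with uniform valuations.  Its symmetric equilibrium bids
   v^2/2: against it a bid b wins with probability r = min(sqrt(2b), 1), so
   r^2 <= 2b and the payoff v r - b is at most v r - r^2/2 <= v^2/2, which is
   exactly the payoff of bidding v^2/2 (winning with probability v). *)

From HB Require Import structures.
From mathcomp Require Import all_boot all_order all_algebra.
From mathcomp Require Import all_classical all_reals all_analysis.
From mathcomp Require Import ring lra.
Import Order.TTheory GRing.Theory Num.Theory.
Local Open Scope ring_scope.

Section TwoBidderGame.
Variable R : realType.
Local Open Scope classical_set_scope.

Lemma ltr_boost (g x y : R) : 0 < g -> 0 <= x -> 0 <= y ->
  (boost g x < boost g y) = (x < y).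
Proof.
move=> g0 x0 y0.
have boostE b : 0 <= b -> boost g b = g - g / (b + 1).
  by move=> b0; rewrite /boost; field; lra.
rewrite !boostE // ltrD2l ltrN2 ltr_pM2l // ltf_pV2 ?posrE ?ltrD2r //; lra.
Qed.

Lemma win_prob_same_latency (g t b : R) (s : strategy R) :
  0 < g -> 0 <= b -> feasible s ->
  win_prob g t t b s = lebesgue_measure [set w : R | 0 <= w <= 1 /\ s w < b].
Proof.
move=> g0 b0 s_ge0; rewrite /win_prob /score; congr (lebesgue_measure _).
apply/seteqP; split=> w /= [w01 lt_sb]; split=> //.
- by move: lt_sb; rewrite ltrD2r ltr_boost // s_ge0.
- by rewrite ltrD2r ltr_boost // s_ge0.
Qed.

Lemma ltr_sqrt_sqr (w c : R) : 0 <= w -> (w < Num.sqrt c) = (w ^+ 2 < c).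
Proof.
move=> w0; rewrite -[in LHS](ger0_norm w0) -sqrtr_sqr !ltNge.
by rewrite ler_sqrt // sqr_ge0.
Qed.

Lemma lebesgue_measure_unit_lt (c : R) : 0 <= c ->
  lebesgue_measure [set w : R | 0 <= w <= 1 /\ w < c] = (Order.min c 1)%:E.
Proof.
move=> c0; have [c1|c1] := leP c 1.
- have -> : [set w : R | 0 <= w <= 1 /\ w < c] = [set` `[0, c[%R].
    apply/seteqP; split=> w /=; rewrite in_itv /=.
    + by case=> /andP[w0 _] wc; rewrite w0.
    + by case/andP=> w0 wc; split=> //; apply/andP; split=> //; lra.
  rewrite lebesgue_measure_itv /= lte_fin oppr0 adde0.
  by case: ltP => // c_le0; have -> : c = 0 by lra.
- have -> : [set w : R | 0 <= w <= 1 /\ w < c] = [set` `[0, 1]%R].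
    apply/seteqP; split=> w /=; rewrite in_itv /=; first by case.
    by case/andP=> w0 w1; split; [apply/andP|lra].
  by rewrite lebesgue_measure_itv /= lte_fin ltr01 oppr0 adde0.
Qed.

Definition half_square : strategy R := fun v => v ^+ 2 / 2.

Lemma half_square_ge0 (v : R) : 0 <= half_square v.
Proof. by rewrite /half_square divr_ge0 ?sqr_ge0. Qed.

Lemma half_square_feasible : feasible half_square.
Proof. by move=> v _; exact: half_square_ge0. Qed.

Lemma half_square_separating : separating half_square.
Proof. by move=> v w v0 vw _; rewrite /half_square; nra. Qed.

Lemma win_prob_half_square (g t b : R) : 0 < g -> 0 <= b ->
  win_prob g t t b half_square = (Order.min (Num.sqrt (2 * b)) 1)%:E.
Proof.
move=> g0 b0; rewrite win_prob_same_latency //; last exact: half_square_feasible.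
rewrite -lebesgue_measure_unit_lt ?sqrtr_ge0 //; congr (lebesgue_measure _).
apply/seteqP; split=> w /= [/andP[w0 w1] lt_wb]; split; rewrite ?w0 ?w1 //.
- by rewrite ltr_sqrt_sqr //; move: lt_wb; rewrite /half_square; lra.
- by move: lt_wb; rewrite ltr_sqrt_sqr /half_square //; lra.
Qed.

Lemma half_square_best_response (g t v b : R) : 0 < g -> 0 <= v <= 1 -> 0 <= b ->
  (interim_payoff g t t v b half_square <=
   interim_payoff g t t v (half_square v) half_square)%E.
Proof.
move=> g0 /andP[v0 v1] b0.
have hv0 : 0 <= half_square v by exact: half_square_ge0.
rewrite /interim_payoff !win_prob_half_square // -!EFinM -!EFinB lee_fin.
have -> : Num.sqrt (2 * half_square v) = v.
  by rewrite /half_square mulrC divfK ?pnatr_eq0 // sqrtr_sqr ger0_norm.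
rewrite (min_idPl v1).
set r := Order.min _ 1.
have r_sqr : r ^+ 2 <= 2 * b.
  have r_le : r <= Num.sqrt (2 * b) by rewrite ge_min lexx.
  have r0 : 0 <= r by rewrite le_min sqrtr_ge0 ler01.
  rewrite -[leRHS]sqr_sqrtr ?mulr_ge0 //.
  by rewrite ler_pXn2r ?nnegrE ?sqrtr_ge0.
have amgm := (leif_mean_square v r).1.
rewrite -expr2 /half_square; clearbody r; lra.
Qed.

End TwoBidderGame.

Theorem proposition4 (R : realType) (g t1 t2 : R) :
  0 < g -> t1 = t2 ->
  exists s1 s2 : strategy R,
    bayes_nash_eq g t1 t2 s1 s2 /\ separating s1 /\ separating s2.
Proof.
move=> g0 <-; exists (@half_square R), (@half_square R).
split; last by split; exact: half_square_separating.
split; first exact: half_square_feasible.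
split; first exact: half_square_feasible.
by split=> v b v01 b0; apply: half_square_best_response.
Qed.
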